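(* Let $M_2\ge1$, $M_1=2^{M_2-1}$, and define the $M_1\times M_2$ matrix $g_{x_1,x_2}=1-2\big(\lfloor 2^{1-x_2}(x_1-1)\rfloor \bmod 2\big)$. Then all singular values of $g$ equal $\sqrt{M_1}$, and the quantum value of $g$ equals $M_1\sqrt{M_2}$ and is attained by a quantum strategy.
   Context: The quantum value is the supremum of $\sum_{x_1,x_2}g_{x_1,x_2}\operatorname{tr}(\rho\,\mathcal A_1(x_1)\otimes\mathcal A_2(x_2))$ over finite-dimensional complex Hilbert spaces $\mathcal H_1,\mathcal H_2$, density operators $\rho$ on $\mathcal H_1\otimes\mathcal H_2$ and Hermitian operators $\mathcal A_i(x_i)$ on $\mathcal H_i$ with eigenvalues in $[-1,1]$. *)

From HB Require Import structures.
From mathcomp Require Import all_boot all_order all_algebra.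
Set Implicit Arguments. Unset Strict Implicit. Unset Printing Implicit Defensive.
Import Order.TTheory GRing.Theory Num.Theory.
Local Open Scope ring_scope.

Definition adjmx (C : numClosedFieldType) m n (A : 'M[C]_(m, n)) : 'M[C]_(n, m) :=
  (map_mx Num.conj A)^T.

(* Decoding an index of C^(m*n) = C^m (x) C^n into a pair of indices
   (inverse of mathcomp's mxvec_index). *)
Definition kron_idx m n (k : 'I_(m * n)) : 'I_m * 'I_n :=
  enum_val (cast_ord (esym (mxvec_cast m n)) k).

Definition kronmx (R : pzRingType) m1 n1 m2 n2
    (A : 'M[R]_(m1, n1)) (B : 'M[R]_(m2, n2)) : 'M[R]_(m1 * m2, n1 * n2) :=
  \matrix_(p, q) (A (kron_idx p).1 (kron_idx q).1 * B (kron_idx p).2 (kron_idx q).2).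

Definition hermitian (C : numClosedFieldType) n (A : 'M[C]_n) : Prop :=
  adjmx A = A.

Definition psd (C : numClosedFieldType) n (A : 'M[C]_n) : Prop :=
  forall v : 'cV[C]_n, 0 <= (adjmx v *m A *m v) 0 0.

Definition density (C : numClosedFieldType) n (rho : 'M[C]_n) : Prop :=
  psd rho /\ \tr rho = 1.

Definition observable (C : numClosedFieldType) n (A : 'M[C]_n) : Prop :=
  hermitian A /\ (forall a, eigenvalue A a -> (-1 <= a <= 1)).

Definition singular_value (C : numClosedFieldType) m n (A : 'M[C]_(m, n)) (s : C) : Prop :=
  0 <= s /\ eigenvalue (adjmx A *m A) (s ^+ 2).

Definition strategy_value (C : numClosedFieldType) M1 M2 (g : 'M[C]_(M1, M2))
    d1 d2 (rho : 'M[C]_(d1 * d2)) (A1 : 'I_M1 -> 'M[C]_d1) (A2 : 'I_M2 -> 'M[C]_d2) : C :=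
  \sum_(x1 < M1) \sum_(x2 < M2) g x1 x2 * \tr (rho *m kronmx (A1 x1) (A2 x2)).

Definition is_quantum_strategy (C : numClosedFieldType) M1 M2 d1 d2
    (rho : 'M[C]_(d1 * d2)) (A1 : 'I_M1 -> 'M[C]_d1) (A2 : 'I_M2 -> 'M[C]_d2) : Prop :=
  density rho /\ (forall x1, observable (A1 x1)) /\ (forall x2, observable (A2 x2)).

Definition quantum_value_attained (C : numClosedFieldType) M1 M2 (g : 'M[C]_(M1, M2)) (v : C) : Prop :=
  (forall d1 d2 (rho : 'M[C]_(d1 * d2)) (A1 : 'I_M1 -> 'M[C]_d1) (A2 : 'I_M2 -> 'M[C]_d2),
      is_quantum_strategy rho A1 A2 -> strategy_value g rho A1 A2 <= v) /\
  (exists d1 d2 (rho : 'M[C]_(d1 * d2)) (A1 : 'I_M1 -> 'M[C]_d1) (A2 : 'I_M2 -> 'M[C]_d2),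
      is_quantum_strategy rho A1 A2 /\ strategy_value g rho A1 A2 = v).

(* The game matrix, 0-based indices i = x1 - 1, j = x2 - 1:
   g_{x1,x2} = 1 - 2 (floor(2^{1-x2} (x1-1)) mod 2) = 1 - 2 ((i %/ 2^j) %% 2). *)
Definition gmat (R : pzRingType) M1 M2 : 'M[R]_(M1, M2) :=
  \matrix_(i < M1, j < M2) (1 - 2 * (((i : nat) %/ 2 ^ (j : nat)) %% 2)%N%:R).

From HB Require Import structures.
From mathcomp Require Import all_boot all_order all_algebra.
From mathcomp Require Import ring zify.
Import Order.TTheory GRing.Theory Num.Theory.
Set Implicit Arguments. Unset Strict Implicit. Unset Printing Implicit Defensive.
Local Open Scope ring_scope.

(* The game matrix is g_{ij} = (-1)^(bit j of i), with i < M1 = 2^(M2-1), j < M2.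
   1. Singular values.  Distinct columns of g are orthogonal, because two
      different binary digits of i are independent signs as i ranges over
      [0, 2^n); hence g^* g = M1 I and every singular value is sqrt M1.
   2. Upper bound, for any real g with g^T g = M1 I.  Writing
      N_x = sum_y g_{xy} B_y, the value is sum_x tr(rho (A_x (x) N_x)).  The
      positivity 0 <= tr(rho Z^* Z) for Z = t A_x (x) 1 - 1 (x) N_x is an
      operator AM-GM inequality; summed over x, orthogonality turns
      sum_x N_x^2 into M1 sum_y B_y^2, and tr(rho (X^2 (x) 1)) <= 1 for an
      observable X.  Taking t = sqrt M2 bounds the value by M1 sqrt M2.
   3. Attainment, for any real +-1 matrix g.  Bob measures M2 pairwise
      anticommuting Hermitian involutions (Clifford generators, block
      matrices of size 2^M2), Alice measures A_x = M2^(-1/2) sum_y g_{xy} B_y,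
      again an involution thanks to anticommutation, and they share the
      maximally entangled state, for which tr(rho (A (x) B)) = tr(A B^T) / d.
   The file first develops Kronecker products and adjoints, then proves the
   three parts in order; the theorem is assembled at the end. *)

Lemma sum_delta (V : zmodType) n (i : 'I_n) (F : 'I_n -> V) :
  \sum_j (if i == j then F j else 0) = F i.
Proof. by rewrite -big_mkcond (big_pred1 i) // => j; rewrite eq_sym. Qed.

Lemma sum_delta_mull (R : pzRingType) n (i : 'I_n) a (F : 'I_n -> R) :
  \sum_j (if i == j then a else 0) * F j = a * F i.
Proof.
rewrite -(sum_delta i (fun j => a * F j)).
by apply: eq_bigr => j _; case: eqP; rewrite ?mul0r.
Qed.

(** * Kronecker products *)

Definition kron_pair m n (u : 'I_m * 'I_n) : 'I_(m * n) :=
  cast_ord (mxvec_cast m n) (enum_rank u).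

Lemma kron_pairK m n : cancel (@kron_pair m n) (@kron_idx m n).
Proof. by move=> u; rewrite /kron_idx /kron_pair cast_ordK enum_rankK. Qed.

Lemma kron_idxK m n : cancel (@kron_idx m n) (@kron_pair m n).
Proof. by move=> p; rewrite /kron_idx /kron_pair enum_valK cast_ordKV. Qed.

Lemma sum_kron_idx (V : zmodType) m n (F : 'I_(m * n) -> V) :
  \sum_p F p = \sum_i \sum_j F (kron_pair (i, j)).
Proof.
rewrite (reindex (@kron_pair m n)); last first.
  by exists (@kron_idx m n) => x _; [apply: kron_pairK | apply: kron_idxK].
by rewrite pair_big /=; apply: eq_bigr => -[i j].
Qed.

Lemma kronE (R : pzRingType) m1 n1 m2 n2 (A : 'M[R]_(m1, n1)) (B : 'M[R]_(m2, n2))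
    i j k l :
  kronmx A B (kron_pair (i, j)) (kron_pair (k, l)) = A i k * B j l.
Proof. by rewrite /kronmx mxE !kron_pairK. Qed.

Lemma kron_mul (R : comPzRingType) m n p q r s (A : 'M[R]_(m, n)) (B : 'M[R]_(p, q))
    (C : 'M[R]_(n, r)) (D : 'M[R]_(q, s)) :
  kronmx A B *m kronmx C D = kronmx (A *m C) (B *m D).
Proof.
apply/matrixP => x y; rewrite -(kron_idxK x) -(kron_idxK y).
case: (kron_idx x) (kron_idx y) => [a b] [c d].
rewrite kronE !mxE sum_kron_idx big_distrlr /=.
by apply: eq_bigr => i _; apply: eq_bigr => j _; rewrite !kronE mulrACA.
Qed.

Lemma kron1 (R : pzRingType) m n :
  kronmx (1%:M : 'M[R]_m) (1%:M : 'M[R]_n) = 1%:M.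
Proof.
apply/matrixP => x y; rewrite -(kron_idxK x) -(kron_idxK y).
case: (kron_idx x) (kron_idx y) => [i j] [k l].
rewrite kronE !mxE (inj_eq (can_inj (@kron_pairK m n))) xpair_eqE.
by case: (i == k); case: (j == l); rewrite ?mulr1 ?mulr0 ?mul0r.
Qed.

Lemma kronBl (R : pzRingType) m1 n1 m2 n2 (A A' : 'M[R]_(m1, n1)) (B : 'M[R]_(m2, n2)) :
  kronmx (A - A') B = kronmx A B - kronmx A' B.
Proof. by apply/matrixP => x y; rewrite !mxE mulrBl. Qed.

Lemma kronBr (R : pzRingType) m1 n1 m2 n2 (A : 'M[R]_(m1, n1)) (B B' : 'M[R]_(m2, n2)) :
  kronmx A (B - B') = kronmx A B - kronmx A B'.
Proof. by apply/matrixP => x y; rewrite !mxE mulrBr. Qed.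

Lemma kronZr (R : comPzRingType) m1 n1 m2 n2 c (A : 'M[R]_(m1, n1)) (B : 'M[R]_(m2, n2)) :
  kronmx A (c *: B) = c *: kronmx A B.
Proof. by apply/matrixP => x y; rewrite !mxE mulrCA. Qed.

Lemma kron_sumr (R : pzRingType) m1 n1 m2 n2 (I : finType)
    (A : 'M[R]_(m1, n1)) (B : I -> 'M[R]_(m2, n2)) :
  kronmx A (\sum_i B i) = \sum_i kronmx A (B i).
Proof.
apply/matrixP => x y; rewrite !mxE !summxE mulr_sumr.
by apply: eq_bigr => i _; rewrite !mxE.
Qed.

Section Adjoint.
Variable C : numClosedFieldType.

Lemma adjmxE m n (A : 'M[C]_(m, n)) : adjmx A = map_mx Num.conj A^T.
Proof. by rewrite /adjmx map_trmx. Qed.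

Lemma adjmxK m n (A : 'M[C]_(m, n)) : adjmx (adjmx A) = A.
Proof. by apply/matrixP => x y; rewrite !mxE conjCK. Qed.

Lemma adjmx_mul m n p (A : 'M[C]_(m, n)) (B : 'M[C]_(n, p)) :
  adjmx (A *m B) = adjmx B *m adjmx A.
Proof. by rewrite /adjmx map_mxM trmx_mul. Qed.

Lemma adjmxB m n (A B : 'M[C]_(m, n)) : adjmx (A - B) = adjmx A - adjmx B.
Proof. by apply/matrixP => x y; rewrite !mxE rmorphB. Qed.

Lemma adjmxZ m n c (A : 'M[C]_(m, n)) : adjmx (c *: A) = c^* *: adjmx A.
Proof. by apply/matrixP => x y; rewrite !mxE rmorphM. Qed.

Lemma adjmx1 n : adjmx (1%:M : 'M[C]_n) = 1%:M.
Proof. by apply/matrixP => x y; rewrite !mxE eq_sym rmorph_nat. Qed.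

Lemma adjmx_sum m n (I : finType) (F : I -> 'M[C]_(m, n)) :
  adjmx (\sum_i F i) = \sum_i adjmx (F i).
Proof.
apply/matrixP => x y; rewrite !mxE !summxE rmorph_sum.
by apply: eq_bigr => i _; rewrite !mxE.
Qed.

Lemma kron_adj m1 n1 m2 n2 (A : 'M[C]_(m1, n1)) (B : 'M[C]_(m2, n2)) :
  adjmx (kronmx A B) = kronmx (adjmx A) (adjmx B).
Proof. by apply/matrixP => x y; rewrite !mxE rmorphM. Qed.

End Adjoint.

Section StateBounds.
Variable C : numClosedFieldType.

Lemma tr_mul_sumr n (I : finType) (rho : 'M[C]_n) (F : I -> 'M[C]_n) :
  \tr (rho *m \sum_i F i) = \sum_i \tr (rho *m F i).
Proof. by rewrite mulmx_sumr raddf_sum. Qed.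

Lemma tr_mulZr n c (rho X : 'M[C]_n) : \tr (rho *m (c *: X)) = c * \tr (rho *m X).
Proof. by rewrite -scalemxAr mxtraceZ. Qed.

Lemma psd_tr_gram n k (rho : 'M[C]_n) (Z : 'M[C]_(k, n)) :
  psd rho -> 0 <= \tr (rho *m (adjmx Z *m Z)).
Proof.
move=> rho_psd; rewrite mulmxA mxtrace_mulC /mxtrace; apply: sumr_ge0 => i _.
have := rho_psd (adjmx (row i Z)); rewrite adjmxK.
suff -> : (row i Z *m rho *m adjmx (row i Z)) 0 0 = (Z *m (rho *m adjmx Z)) i i by [].
by rewrite mulmxA -row_mul !mxE; apply: eq_bigr => j _; rewrite !mxE.
Qed.

Lemma observable_spectral_bound n (A : 'M[C]_n) :
  observable A -> forall i, -1 <= spectral_diag A 0 i <= 1.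
Proof.
case=> A_herm A_eig i; apply: A_eig; apply/eigenvalueP.
have A_normal : A \is normalmx by rewrite qualifE /= -adjmxE A_herm.
have AE := orthomx_spectralP A_normal.
have P_unit := spectral_unit A.
set P := spectralmx A in AE P_unit *.
exists (row i P).
  rewrite {1}AE !mulmxA -row_mul mulmxV // row1.
  by rewrite -rowE row_diag_mx -scalemxAl -rowE.
apply/eqP => row_eq0; have := row1 C i.
rewrite -(mulmxV P_unit) row_mul row_eq0 mul0mx => /matrixP/(_ 0 i).
by rewrite !mxE !eqxx /= => /eqP; rewrite eq_sym oner_eq0.
Qed.

(* For an observable A, the defect 1 - A^2 is a Gram matrix W^* W:
   diagonalize A unitarily and take W = diag(sqrt(1 - a_i^2)) P. *)
Lemma observable_defect_gram n (A : 'M[C]_n) :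
  observable A -> exists W : 'M[C]_n, 1%:M - A *m A = adjmx W *m W.
Proof.
move=> A_obs; have [A_herm _] := A_obs.
have A_normal : A \is normalmx by rewrite qualifE /= -adjmxE A_herm.
have AE := orthomx_spectralP A_normal.
set P := spectralmx A in AE *; set sp := spectral_diag A in AE *.
have P_unit : P \in unitmx := spectral_unit A.
have P_inv : invmx P = adjmx P by rewrite invmx_unitary ?adjmxE // spectral_unitarymx.
have defect_ge0 i : 0 <= 1 - sp 0 i ^+ 2.
  have /andP[lo hi] := observable_spectral_bound A_obs i.
  rewrite (_ : 1 - sp 0 i ^+ 2 = (1 - sp 0 i) * (sp 0 i - -1)); last by ring.
  by apply: mulr_ge0; rewrite subr_ge0.
set s := \row_i sqrtC (1 - sp 0 i ^+ 2).
have s_adj : adjmx (diag_mx s) = diag_mx s.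
  apply/matrixP => i j; rewrite !mxE.
  case: (eqVneq i j) => [->|_]; last by rewrite !mulr0n rmorph0.
  by rewrite !mulr1n geC0_conj // sqrtC_ge0.
exists (diag_mx s *m P).
rewrite adjmx_mul s_adj -P_inv {1 2}AE !mulmxA.
rewrite -[invmx P *m diag_mx sp *m P *m invmx P]mulmxA mulmxV // mulmx1.
rewrite -{1}(mulVmx P_unit) -[invmx P *m diag_mx s *m diag_mx s]mulmxA -(mulmxA (invmx P)).
rewrite -{1}(mulmx1 (invmx P)) -mulmxBl -mulmxBr.
congr (_ *m _ *m _); rewrite !mulmx_diag; apply/matrixP => i j; rewrite !mxE.
case: (eqVneq i j) => [->|_]; last by rewrite !mulr0n subr0.
by rewrite !mulr1n -!expr2 sqrtCK.
Qed.

Lemma density_tr_le1 n (rho X : 'M[C]_n) k (W : 'M[C]_(k, n)) :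
  density rho -> 1%:M - X = adjmx W *m W -> \tr (rho *m X) <= 1.
Proof.
move=> [rho_psd rho_tr] X_defect.
have -> : X = 1%:M - adjmx W *m W by rewrite -X_defect opprB addrC subrK.
by rewrite mulmxBr raddfB /= mulmx1 rho_tr lerBlDr lerDl psd_tr_gram.
Qed.

Lemma tr_kron_sq_left_le1 d1 d2 (rho : 'M[C]_(d1 * d2)) (A : 'M[C]_d1) :
  density rho -> observable A -> \tr (rho *m kronmx (A *m A) 1%:M) <= 1.
Proof.
move=> rho_dens /observable_defect_gram [W W_def].
apply: (density_tr_le1 (W := kronmx W (1%:M : 'M_d2))) => //.
by rewrite kron_adj adjmx1 kron_mul mulmx1 -W_def kronBl kron1.
Qed.

Lemma tr_kron_sq_right_le1 d1 d2 (rho : 'M[C]_(d1 * d2)) (B : 'M[C]_d2) :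
  density rho -> observable B -> \tr (rho *m kronmx 1%:M (B *m B)) <= 1.
Proof.
move=> rho_dens /observable_defect_gram [W W_def].
apply: (density_tr_le1 (W := kronmx (1%:M : 'M_d1) W)) => //.
by rewrite kron_adj adjmx1 kron_mul mulmx1 -W_def kronBr kron1.
Qed.

(* Operator AM-GM: 2t <A (x) N> <= t^2 <A^2 (x) 1> + <1 (x) N^2> for
   Hermitian A, N and t >= 0, from the positivity of Z^* Z,
   Z = t A (x) 1 - 1 (x) N. *)
Lemma tr_kron_amgm d1 d2 (rho : 'M[C]_(d1 * d2)) (A : 'M[C]_d1) (N : 'M[C]_d2) t :
  psd rho -> adjmx A = A -> adjmx N = N -> 0 <= t ->
  2 * t * \tr (rho *m kronmx A N) <=
  t ^+ 2 * \tr (rho *m kronmx (A *m A) 1%:M) + \tr (rho *m kronmx 1%:M (N *m N)).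
Proof.
move=> rho_psd A_herm N_herm t_ge0.
have := psd_tr_gram (t *: kronmx A 1%:M - kronmx 1%:M N) rho_psd.
rewrite adjmxB adjmxZ !kron_adj A_herm N_herm !adjmx1 geC0_conj //.
rewrite mulmxBl !mulmxBr -!scalemxAl -!scalemxAr !kron_mul !mul1mx !mulmx1 scalerA.
rewrite !raddfB /= !mxtraceZ -subr_ge0; congr (0 <= _); rewrite expr2; ring.
Qed.

End StateBounds.

(** * The upper bound *)

Section UpperBound.
Variables (C : numClosedFieldType) (M1 M2 : nat) (g : 'M[C]_(M1, M2)).
Hypothesis M2_gt0 : (0 < M2)%N.
Hypothesis g_real : forall x y, (g x y)^* = g x y.
Hypothesis g_orth : forall y z, \sum_x g x y * g x z = (y == z)%:R * M1%:R.

(* Bob's effective observable against Alice's question x. *)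
Let N d (B : 'I_M2 -> 'M[C]_d) x := \sum_y g x y *: B y.

Lemma N_selfadjoint d (B : 'I_M2 -> 'M[C]_d) x :
  (forall y, adjmx (B y) = B y) -> adjmx (N B x) = N B x.
Proof.
move=> B_herm; rewrite adjmx_sum; apply: eq_bigr => y _.
by rewrite adjmxZ g_real B_herm.
Qed.

(* Orthogonality of the columns of g: sum_x N_x^2 = M1 sum_y B_y^2. *)
Lemma sum_N_sq d (B : 'I_M2 -> 'M[C]_d) :
  \sum_x N B x *m N B x = M1%:R *: \sum_y B y *m B y.
Proof.
have N_sq x : N B x *m N B x = \sum_y \sum_z (g x y * g x z) *: (B y *m B z).
  rewrite mulmx_suml; apply: eq_bigr => y _; rewrite mulmx_sumr.
  by apply: eq_bigr => z _; rewrite -scalemxAl -scalemxAr scalerA.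
under eq_bigr do rewrite N_sq.
rewrite exchange_big scaler_sumr; apply: eq_bigr => y _ /=.
rewrite exchange_big /=; under eq_bigr do rewrite -scaler_suml g_orth.
rewrite (bigD1 y) //= eqxx mul1r big1 ?addr0 // => z /negbTE.
by rewrite eq_sym => ->; rewrite mul0r scale0r.
Qed.

Lemma strategy_value_le d1 d2 (rho : 'M[C]_(d1 * d2)) A B :
  is_quantum_strategy rho A B -> strategy_value g rho A B <= M1%:R * sqrtC M2%:R.
Proof.
move=> [rho_dens [A_obs B_obs]].
set t := sqrtC M2%:R.
have t_gt0 : 0 < t by rewrite sqrtC_gt0 ltr0n.
have t_sq : t ^+ 2 = M2%:R by rewrite sqrtCK.
have value_N : strategy_value g rho A B = \sum_x \tr (rho *m kronmx (A x) (N B x)).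
  apply: eq_bigr => x _; rewrite kron_sumr tr_mul_sumr.
  by apply: eq_bigr => y _; rewrite kronZr tr_mulZr.
have bob_sum : \sum_x \tr (rho *m kronmx 1%:M (N B x *m N B x)) <= M1%:R * M2%:R.
  rewrite -tr_mul_sumr -kron_sumr sum_N_sq kronZr tr_mulZr kron_sumr tr_mul_sumr.
  rewrite ler_wpM2l ?ler0n //.
  rewrite -[M2 in X in _ <= X]card_ord -sumr_const.
  by apply: ler_sum => y _; apply: tr_kron_sq_right_le1.
have alice_sum : \sum_x \tr (rho *m kronmx (A x *m A x) 1%:M) <= M1%:R.
  rewrite -[M1 in X in _ <= X]card_ord -sumr_const.
  by apply: ler_sum => x _; apply: tr_kron_sq_left_le1.
suff : 2 * t * strategy_value g rho A B <= 2 * t * (M1%:R * t).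
  by rewrite ler_pM2l ?mulr_gt0 ?ltr0n.
rewrite value_N mulr_sumr.
apply: le_trans (_ : \sum_x (t ^+ 2 * \tr (rho *m kronmx (A x *m A x) 1%:M)
      + \tr (rho *m kronmx 1%:M (N B x *m N B x))) <= _).
  apply: ler_sum => x _; apply: tr_kron_amgm (ltW t_gt0); first by case: rho_dens.
    by case: (A_obs x).
  by apply: N_selfadjoint => y; case: (B_obs y).
rewrite big_split /= -mulr_sumr.
apply: le_trans (_ : t ^+ 2 * M1%:R + M1%:R * M2%:R <= _).
  by apply: lerD => //; apply: ler_wpM2l => //; apply: exprn_ge0 (ltW t_gt0).
by rewrite (_ : 2 * t * (M1%:R * t) = t ^+ 2 * M1%:R + M1%:R * M2%:R) // -t_sq; ring.
Qed.

End UpperBound.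

(** * The game matrix and its singular values *)

Definition bit_sign (R : pzRingType) (i j : nat) : R := 1 - 2 * ((i %/ 2 ^ j) %% 2)%N%:R.

Lemma gmatE (R : pzRingType) M1 M2 x y : gmat R M1 M2 x y = bit_sign R x y.
Proof. by rewrite mxE. Qed.

Section BitSign.
Variable R : comNzRingType.
Local Notation sgn := (bit_sign R).

Lemma bit_sign_sq i j : sgn i j * sgn i j = 1.
Proof. by rewrite /bit_sign modn2; case: odd => /=; ring. Qed.

Lemma bit_sign0 j : sgn 0 j = 1.
Proof. by rewrite /bit_sign div0n mod0n mulr0 subr0. Qed.

Lemma bit_sign_even0 a : sgn (2 * a) 0 = 1.
Proof. by rewrite /bit_sign expn0 divn1 (_ : (2 * a) %% 2 = 0)%N ?mulr0 ?subr0 //; lia. Qed.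

Lemma bit_sign_odd0 a : sgn (2 * a + 1) 0 = -1.
Proof. rewrite /bit_sign expn0 divn1 (_ : (2 * a + 1) %% 2 = 1)%N; [ring | lia]. Qed.

Lemma bit_sign_evenS a j : sgn (2 * a) j.+1 = sgn a j.
Proof. by rewrite /bit_sign expnS divnMA (_ : (2 * a) %/ 2 = a)%N //; lia. Qed.

Lemma bit_sign_oddS a j : sgn (2 * a + 1) j.+1 = sgn a j.
Proof. by rewrite /bit_sign expnS divnMA (_ : (2 * a + 1) %/ 2 = a)%N //; lia. Qed.

Lemma sum_even_odd m (F : nat -> R) :
  \sum_(0 <= i < 2 * m) F i = \sum_(0 <= i < m) (F (2 * i)%N + F (2 * i + 1)%N).
Proof.
elim: m => [|m IH]; first by rewrite muln0 !big_geq.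
rewrite (_ : 2 * m.+1 = (2 * m).+2)%N; last by lia.
by rewrite !big_nat_recr //= IH addrA; congr (_ + _ + _); congr F; lia.
Qed.

(* Two distinct bits of i are independent signs as i ranges over [0, 2^n),
   as long as one of them is a bit below n; induction on n splits i into its
   lowest bit and the rest. *)
Lemma bit_sign_orth n y z : y != z ->
  \sum_(0 <= i < 2 ^ n) sgn i y * sgn i z =
    if (n <= y)%N && (n <= z)%N then (2 ^ n)%:R else 0.
Proof.
elim: n y z => [|n IH] y z y_neq_z; first by rewrite expn0 big_nat1 !bit_sign0 mulr1.
rewrite expnS sum_even_odd.
case: y y_neq_z => [|y]; case: z => [|z] //= y_neq_z.
- rewrite ?ltn0 ?andbF big1 // => i _.
  by rewrite bit_sign_even0 bit_sign_odd0 bit_sign_evenS bit_sign_oddS; ring.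
- rewrite ?ltn0 ?andbF big1 // => i _.
  by rewrite bit_sign_even0 bit_sign_odd0 bit_sign_evenS bit_sign_oddS; ring.
rewrite !ltnS.
under eq_bigr do rewrite !bit_sign_evenS !bit_sign_oddS -mulr2n.
rewrite sumrMnl IH //; case: ifP => _; last by rewrite mul0rn.
by rewrite natrM mulr_natl.
Qed.

Lemma gmat_col_orth M2 : (1 <= M2)%N ->
  forall y z : 'I_M2, \sum_(x < 2 ^ (M2 - 1)) gmat R _ M2 x y * gmat R _ M2 x z
    = (y == z)%:R * (2 ^ (M2 - 1))%N%:R.
Proof.
move=> M2_ge1 y z; under eq_bigr do rewrite !gmatE.
case: (eqVneq y z) => [->|y_neq_z].
  by under eq_bigr do rewrite bit_sign_sq; rewrite sumr_const card_ord mul1r.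
rewrite mul0r -(big_mkord xpredT (fun i => sgn i y * sgn i z)) bit_sign_orth //.
case: ifP => // /andP[y_ge z_ge]; move: y_neq_z; rewrite -val_eqE /=.
by have := ltn_ord y; have := ltn_ord z; lia.
Qed.

End BitSign.

Lemma bit_sign_conj (C : numClosedFieldType) i j : (bit_sign C i j)^* = bit_sign C i j.
Proof. by rewrite /bit_sign rmorphB rmorphM !rmorph_nat rmorph1. Qed.

Lemma gmat_gram (C : numClosedFieldType) M2 : (1 <= M2)%N ->
  adjmx (gmat C (2 ^ (M2 - 1)) M2) *m gmat C _ M2 = ((2 ^ (M2 - 1))%N%:R)%:M.
Proof.
move=> M2_ge1; apply/matrixP => y z; rewrite !mxE.
under eq_bigr do rewrite mxE mxE gmatE bit_sign_conj -gmatE.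
by rewrite gmat_col_orth //; case: (y == z); rewrite ?mul1r ?mul0r ?mulr1n ?mulr0n.
Qed.

Lemma gmat_singular_value (C : numClosedFieldType) M2 (s : C) : (1 <= M2)%N ->
  singular_value (gmat C (2 ^ (M2 - 1)) M2) s -> s = sqrtC (2 ^ (M2 - 1))%N%:R.
Proof.
move=> M2_ge1 [s_ge0]; rewrite gmat_gram // => /eigenvalueP [v].
rewrite mul_mx_scalar => /eqP; rewrite -subr_eq0 -scalerBl scaler_eq0.
case/orP => [|/eqP->]; last by rewrite eqxx.
by rewrite subr_eq0 => /eqP ->; rewrite sqrCK.
Qed.

(** * Clifford generators *)

(* clifford n j (j < n) are n pairwise anticommuting real symmetric
   involutions of size clifford_dim n = 2^n, defined by the recursion
   G'_j = diag(G_j, -G_j) for j < n and G'_n = [[0, 1], [1, 0]]. *)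
Fixpoint clifford_dim (n : nat) : nat :=
  if n is k.+1 then (clifford_dim k + clifford_dim k)%N else 1%N.

Fixpoint clifford (C : numClosedFieldType) (n : nat) : nat -> 'M[C]_(clifford_dim n) :=
  match n as n0 return nat -> 'M[C]_(clifford_dim n0) with
  | 0 => fun _ => 1%:M
  | k.+1 => fun j => if (j < k)%N then block_mx (clifford C k j) 0 0 (- clifford C k j)
                     else block_mx 0 1%:M 1%:M 0
  end.

Lemma clifford_dim_gt0 n : (0 < clifford_dim n)%N.
Proof. by elim: n => //= n IH; rewrite addn_gt0 IH. Qed.

Section Clifford.
Variable C : numClosedFieldType.
Local Notation G := (clifford C).

Lemma clifford_tr n j : (G n j)^T = G n j.
Proof.
elim: n j => [|n IH] j /=; first by rewrite trmx1.
by case: ifP => _; rewrite tr_block_mx ?trmx0 ?trmx1 // linearN /= IH.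
Qed.

Lemma clifford_adj n j : adjmx (G n j) = G n j.
Proof.
rewrite adjmxE clifford_tr; elim: n j => [|n IH] j /=; first by rewrite map_mx1.
by case: ifP => _; rewrite map_block_mx ?map_mx0 ?map_mx1 // map_mxN IH.
Qed.

Lemma clifford_sq n j : G n j *m G n j = 1%:M.
Proof.
elim: n j => [|n IH] j /=; first by rewrite mulmx1.
rewrite [RHS]scalar_mx_block.
case: ifP => _; rewrite mulmx_block !mul0mx !mulmx0 ?addr0 ?add0r ?mulmx1 ?mul1mx //.
by rewrite mulNmx mulmxN opprK IH.
Qed.

Lemma clifford_anticomm n j l : (j < n)%N -> (l < n)%N -> j != l ->
  G n j *m G n l = - (G n l *m G n j).
Proof.
elim: n j l => [|n IH] j l //= j_lt l_lt j_neq_l.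
case: (ltnP j n) => j_lt_n; case: (ltnP l n) => l_lt_n; last first.
  by move: j_neq_l; rewrite (_ : j = l) ?eqxx //; lia.
all: rewrite !mulmx_block !mul0mx !mulmx0 !addr0 !add0r opp_block_mx !oppr0.
all: rewrite !mulNmx !mulmxN ?mulmx1 ?mul1mx ?opprK //.
by rewrite IH.
Qed.

(* The generators are orthogonal for the trace form: anticommuting elements
   have traceless products. *)
Lemma clifford_trace n j l : (j < n)%N -> (l < n)%N ->
  \tr (G n j *m G n l) = (j == l)%:R * (clifford_dim n)%:R.
Proof.
move=> j_lt l_lt; case: (eqVneq j l) => [->|j_neq_l].
  by rewrite clifford_sq mxtrace1 mul1r.
have tr_twice : \tr (G n j *m G n l) *+ 2 = 0.
  rewrite mulr2n {2}clifford_anticomm // -scaleN1r mxtraceZ mulN1r mxtrace_mulC.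
  by rewrite subrr.
by move/eqP: tr_twice; rewrite mulrn_eq0 mul0r => /eqP.
Qed.

End Clifford.

(** * Observables from involutions, and the maximally entangled state *)

Section EntangledStrategies.
Variable C : numClosedFieldType.

Lemma involution_eigenvalue n (A : 'M[C]_n) a :
  A *m A = 1%:M -> eigenvalue A a -> -1 <= a <= 1.
Proof.
move=> A_sq /eigenvalueP [v v_eig v_neq0].
have : v = (a ^+ 2) *: v.
  by rewrite -{1}(mulmx1 v) -A_sq mulmxA v_eig -scalemxAl v_eig scalerA expr2.
move/eqP; rewrite -subr_eq0 -{1}(scale1r v) -scalerBl scaler_eq0 (negbTE v_neq0) orbF.
rewrite (_ : 1 - a ^+ 2 = (1 - a) * (1 + a)); last by ring.
have N1_le1 : -1 <= 1 :> C by rewrite (le_trans (lerN10 _) ler01).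
rewrite mulf_eq0 => /orP[|]; first by rewrite subr_eq0 => /eqP <-; rewrite lexx andbT.
by rewrite addrC addr_eq0 => /eqP ->; rewrite lexx.
Qed.

Lemma involution_observable n (A : 'M[C]_n) :
  adjmx A = A -> A *m A = 1%:M -> observable A.
Proof. by move=> A_herm A_sq; split=> // a; apply: involution_eigenvalue. Qed.

Definition max_entangled_vec d : 'cV[C]_(d * d) :=
  \col_p (if (kron_idx p).1 == (kron_idx p).2 then (sqrtC d%:R)^-1 else 0).

Definition max_entangled_state d : 'M[C]_(d * d) :=
  max_entangled_vec d *m adjmx (max_entangled_vec d).

Lemma tr_max_entangled d (A B : 'M[C]_d) : (0 < d)%N ->
  \tr (max_entangled_state d *m kronmx A B) = (d%:R)^-1 * \sum_i \sum_j A i j * B i j.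
Proof.
move=> d_gt0; set c := (sqrtC (d%:R : C))^-1.
have c_conj : c^* = c by rewrite geC0_conj // invr_ge0 sqrtC_ge0 ler0n.
have c_sq : c * c = (d%:R)^-1 by rewrite -expr2 exprVn sqrtCK.
rewrite /max_entangled_state -mulmxA mxtrace_mulC trace_mx11 !mxE.
under eq_bigr do rewrite !mxE mulr_suml.
rewrite sum_kron_idx.
under eq_bigr => q _ do under eq_bigr => i _ do rewrite kron_pairK /= -mulr_suml mulrC.
under eq_bigr => q _ do rewrite sum_delta_mull sum_kron_idx.
under eq_bigr => q _ do under eq_bigr => i _ do under eq_bigr => j _ do
  rewrite !mxE !kron_pairK /= (fun_if Num.conj) rmorph0 c_conj.
under eq_bigr => q _ do under eq_bigr => i _ do rewrite sum_delta_mull.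
rewrite exchange_big /= mulr_sumr -c_sq; apply: eq_bigr => i _.
by rewrite mulr_sumr mulr_sumr; apply: eq_bigr => j _; rewrite /c; ring.
Qed.

Lemma sum_entrywise_mul d (A B : 'M[C]_d) : B^T = B ->
  \sum_i \sum_j A i j * B i j = \tr (A *m B).
Proof.
move=> B_sym; apply: eq_bigr => i _; rewrite mxE; apply: eq_bigr => j _.
by rewrite -{2}B_sym mxE.
Qed.

Lemma max_entangled_density d : (0 < d)%N -> density (max_entangled_state d).
Proof.
move=> d_gt0; split.
  move=> v; set phi := max_entangled_vec d.
  have -> : adjmx v *m (phi *m adjmx phi) *m v = adjmx (adjmx phi *m v) *m (adjmx phi *m v).
    by rewrite adjmx_mul adjmxK !mulmxA.
  by rewrite !mxE big_ord1 !mxE mulrC mul_conjC_ge0.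
rewrite -[max_entangled_state d]mulmx1 -kron1 tr_max_entangled //.
rewrite sum_entrywise_mul ?trmx1 // mulmx1 mxtrace1 mulVf //.
by rewrite pnatr_eq0 -lt0n.
Qed.

(* If the G_y are pairwise anticommuting involutions and a_y = +-1, then
   (sum_y a_y G_y)^2 = n; adding the double sum to itself with the indices exchanged makes the
   cross terms cancel. *)
Lemma anticomm_square_sum d n (G : 'I_n -> 'M[C]_d) (a : 'I_n -> C) :
  (forall y, G y *m G y = 1%:M) ->
  (forall y z, y != z -> G y *m G z = - (G z *m G y)) ->
  (forall y, a y * a y = 1) ->
  \sum_y \sum_z (a y * a z) *: (G y *m G z) = n%:R *: 1%:M.
Proof.
move=> G_sq G_anti a_sq.
set S := \sum_y \sum_z (a y * a z) *: (G y *m G z).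
have pair_sum y z : (a y * a z) *: (G y *m G z) + (a z * a y) *: (G z *m G y)
    = if y == z then 2 *: 1%:M else 0.
  case: (eqVneq y z) => [->|y_neq_z]; first by rewrite G_sq a_sq -scalerDl.
  by rewrite G_anti // mulrC scalerN addNr.
have S_twice : S + S = (n%:R * 2) *: 1%:M.
  rewrite {2}/S exchange_big /= -big_split /=.
  under eq_bigr => y _ do rewrite -big_split /=.
  under eq_bigr => y _ do under eq_bigr => z _ do rewrite pair_sum.
  under eq_bigr => y _ do rewrite (sum_delta y (fun=> 2 *: 1%:M)).
  by rewrite sumr_const card_ord -scaler_nat scalerA.
have two_neq0 : (2 : C) != 0 by rewrite pnatr_eq0.
have -> : S = (2 : C)^-1 *: (S + S).
  by rewrite -mulr2n -scaler_nat scalerA mulVf // scale1r.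
by rewrite S_twice scalerA mulrCA mulVf // mulr1.
Qed.

End EntangledStrategies.

(** * Attainment *)

Section Attainment.
Variables (C : numClosedFieldType) (M1 M2 : nat) (g : 'M[C]_(M1, M2)).
Hypothesis M2_gt0 : (0 < M2)%N.
Hypothesis g_real : forall x y, (g x y)^* = g x y.
Hypothesis g_sign : forall x y, g x y * g x y = 1.

Let d := clifford_dim M2.
Let t : C := sqrtC M2%:R.

Definition bob_obs (y : 'I_M2) : 'M[C]_d := clifford C M2 y.

Definition alice_obs (x : 'I_M1) : 'M[C]_d := t^-1 *: \sum_y g x y *: bob_obs y.

Lemma t_neq0 : t != 0.
Proof. by rewrite sqrtC_eq0 pnatr_eq0 -lt0n. Qed.

Lemma alice_obs_sq x : alice_obs x *m alice_obs x = 1%:M.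
Proof.
rewrite /alice_obs -scalemxAl -scalemxAr scalerA mulmx_suml.
under eq_bigr do rewrite mulmx_sumr.
under eq_bigr => y _ do under eq_bigr => z _ do rewrite -scalemxAl -scalemxAr scalerA.
rewrite anticomm_square_sum.
- by rewrite scalerA -[M2%:R](sqrtCK (M2%:R : C)) -expr2 exprVn mulVf ?scale1r ?expf_neq0 ?t_neq0.
- by move=> y; apply: clifford_sq.
- by move=> y z y_neq_z; apply: clifford_anticomm.
- by move=> y; apply: g_sign.
Qed.

Lemma alice_obs_adj x : adjmx (alice_obs x) = alice_obs x.
Proof.
rewrite /alice_obs adjmxZ adjmx_sum geC0_conj ?invr_ge0 ?sqrtC_ge0 ?ler0n //.
by congr (_ *: _); apply: eq_bigr => y _; rewrite adjmxZ g_real clifford_adj.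
Qed.

Lemma bob_obs_trace y z : \tr (bob_obs y *m bob_obs z) = (y == z)%:R * d%:R.
Proof. exact: clifford_trace. Qed.

Lemma tr_alice_bob x y : \tr (alice_obs x *m bob_obs y) = t^-1 * g x y * d%:R.
Proof.
rewrite /alice_obs -scalemxAl mxtraceZ mulmx_suml raddf_sum /= -mulrA; congr (_ * _).
under eq_bigr do rewrite -scalemxAl mxtraceZ bob_obs_trace.
rewrite (bigD1 y) //= eqxx mul1r big1 ?addr0 // => z /negbTE ->.
by rewrite mul0r mulr0.
Qed.

(* Each of the M1 M2 terms of the value equals g_xy^2 / t = 1 / t, and
   M1 M2 / t = M1 t. *)
Lemma strategy_value_attained :
  exists d1 d2 (rho : 'M[C]_(d1 * d2)) (A : 'I_M1 -> 'M[C]_d1) (B : 'I_M2 -> 'M[C]_d2),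
    is_quantum_strategy rho A B /\ strategy_value g rho A B = M1%:R * t.
Proof.
have d_gt0 : (0 < d)%N := clifford_dim_gt0 M2.
exists d, d, (max_entangled_state C d), alice_obs, bob_obs; split.
  split; first exact: max_entangled_density.
  split=> [x|y]; apply: involution_observable.
  - exact: alice_obs_adj.
  - exact: alice_obs_sq.
  - exact: clifford_adj.
  - exact: clifford_sq.
have term x y : g x y * \tr (max_entangled_state C d *m kronmx (alice_obs x) (bob_obs y))
    = t^-1.
  rewrite tr_max_entangled // sum_entrywise_mul ?clifford_tr // tr_alice_bob.
  transitivity (g x y * g x y * t^-1 * ((d%:R)^-1 * d%:R)); first by ring.
  by rewrite g_sign mulVf ?mul1r ?mulr1 // pnatr_eq0 -lt0n.
rewrite /strategy_value; under eq_bigr => x _ do under eq_bigr => y _ do rewrite term.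
rewrite !sumr_const !card_ord -[t^-1 *+ M2]mulr_natl -[_ *+ M1]mulr_natl.
by rewrite -(sqrtCK (M2%:R : C)) expr2 -mulrA mulfV ?t_neq0 ?mulr1.
Qed.

End Attainment.

Theorem mainTheorem10 (C : numClosedFieldType) (M2 : nat) (hM2 : (1 <= M2)%N) :
  let M1 := (2 ^ (M2 - 1))%N in
  (forall s : C, singular_value (gmat C M1 M2) s -> s = sqrtC (M1%:R)) /\
  quantum_value_attained (gmat C M1 M2) (M1%:R * sqrtC (M2%:R)).
Proof.
move=> M1.
have g_real x y : (gmat C M1 M2 x y)^* = gmat C M1 M2 x y by rewrite gmatE bit_sign_conj.
have g_sign x y : gmat C M1 M2 x y * gmat C M1 M2 x y = 1 by rewrite gmatE bit_sign_sq.
split; first by move=> s; apply: gmat_singular_value.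
split; last exact: strategy_value_attained.
move=> d1 d2 rho A B; apply: strategy_value_le => //.
exact: gmat_col_orth.
Qed.
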